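(* Let $(C,\mathfrak p,\mathfrak d)$ be a regular $q$-cycle coalgebra with $\mathfrak p_{11}^1\ne0$. Then $\mathfrak d_{1r}^1=\mathfrak p_{1r}^1$ for all $r\in\{0,\dots,n-1\}$.
   Context: $K$ is an algebraically closed field of characteristic $0$ and $n\ge2$. $C$ is the coalgebra dual to $K[y]/\langle y^n\rangle$: basis $x_0,\dots,x_{n-1}$, $\Delta(x_i)=\sum_{j+k=i}x_j\otimes x_k$, $\epsilon(x_i)=\delta_{i0}$; $C\otimes C$ has the tensor product coalgebra structure; Sweedler notation $\Delta(b)=b_{(1)}\otimes b_{(2)}$. For linear maps $\mathfrak p,\mathfrak d\colon C\otimes C\to C$ write $a\cdot b=\mathfrak p(a\otimes b)$, $a:b=\mathfrak d(a\otimes b)$, $\mathfrak p(x_i\otimes x_j)=\sum_{k=0}^{n-1}\mathfrak p_{ij}^kx_k$, $\mathfrak d(x_i\otimes x_j)=\sum_{k=0}^{n-1}\mathfrak d_{ij}^kx_k$. A triple $(C,\mathfrak p,\mathfrak d)$ with $\mathfrak p,\mathfrak d$ coalgebra morphisms is a regular $q$-magma coalgebra if there are coalgebra morphisms $a\otimes b\mapsto a^b$, $a\otimes b\mapsto a_b$ from $C\otimes C$ to $C$ with $a^{b_{(1)}}\cdot b_{(2)}=(a\cdot b_{(1)})^{b_{(2)}}=\epsilon(b)a$ and $(a:b_{(2)})_{b_{(1)}}=a_{b_{(2)}}:b_{(1)}=\epsilon(b)a$. It is a regular $q$-cycle coalgebra if moreover for all $a,b,c$: (1) $(a\cdot b_{(1)})\cdot(c:b_{(2)})=(a\cdot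 c_{(2)})\cdot(b\cdot c_{(1)})$; (2) $(a\cdot b_{(1)}):(c\cdot b_{(2)})=(a:c_{(2)})\cdot(b:c_{(1)})$; (3) $(a:b_{(1)}):(c:b_{(2)})=(a:c_{(2)}):(b\cdot c_{(1)})$. *)

From HB Require Import structures.
From mathcomp Require Import all_boot all_order all_algebra.
Set Implicit Arguments. Unset Strict Implicit. Unset Printing Implicit Defensive.
Import Order.TTheory GRing.Theory.
Local Open Scope ring_scope.

(* C = dual coalgebra of K[y]/<y^n>, basis x_0..x_{n-1}.
   An element of C is its coordinate vector 'I_n -> K.
   A linear map f : C (x) C -> C is given by its structure constants
   f i j k = f_{ij}^k (only indices < n are ever used). *)
Section QCycle.
Variables (K : fieldType) (n : nat).

Definition vec := 'I_n -> K.

Definition bas (i : nat) : vec := fun k => (k == i :> nat)%:R.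

Definition bil (f : nat -> nat -> nat -> K) (a b : vec) : vec :=
  fun k => \sum_(i < n) \sum_(j < n) a i * b j * f i j k.

Definition eps (b : vec) : K := \sum_(j < n) b j * (j == 0%N :> nat)%:R.

(* coefficient of x_{j1} (x) x_{j2} in Delta(b), where
   Delta(x_j) = sum_{j1+j2=j} x_{j1} (x) x_{j2} *)
Definition delta (b : vec) (j1 j2 : 'I_n) : K :=
  \sum_(j < n) b j * ((j1 + j2)%N == j :> nat)%:R.

Definition sw (b : vec) (F : vec -> vec -> K) : K :=
  \sum_(j1 < n) \sum_(j2 < n) delta b j1 j2 * F (bas j1) (bas j2).

(* f : C (x) C -> C is a coalgebra morphism (C (x) C with the tensor
   product coalgebra structure), written on the basis x_i (x) x_j. *)
Definition coalg_morph (f : nat -> nat -> nat -> K) : Prop :=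
  (forall i j : 'I_n, f i j 0%N = ((i == 0%N :> nat) && (j == 0%N :> nat))%:R) /\
  (forall i j a b : 'I_n,
     \sum_(k < n) f i j k * ((a + b)%N == k :> nat)%:R =
     \sum_(i1 < n) \sum_(i2 < n | (i1 + i2)%N == i :> nat)
       \sum_(j1 < n) \sum_(j2 < n | (j1 + j2)%N == j :> nat)
          f i1 j1 a * f i2 j2 b).

(* regular q-magma coalgebra (C, p, d); U is a (x) b |-> a^b, V is a (x) b |-> a_b *)
Definition regular_qmagma (P D : nat -> nat -> nat -> K) : Prop :=
  coalg_morph P /\ coalg_morph D /\
  exists U V : nat -> nat -> nat -> K,
    coalg_morph U /\ coalg_morph V /\
    (forall (a b : vec) (k : 'I_n),
       sw b (fun b1 b2 => bil P (bil U a b1) b2 k) = eps b * a k) /\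
    (forall (a b : vec) (k : 'I_n),
       sw b (fun b1 b2 => bil U (bil P a b1) b2 k) = eps b * a k) /\
    (forall (a b : vec) (k : 'I_n),
       sw b (fun b1 b2 => bil V (bil D a b2) b1 k) = eps b * a k) /\
    (forall (a b : vec) (k : 'I_n),
       sw b (fun b1 b2 => bil D (bil V a b2) b1 k) = eps b * a k).

Definition regular_qcycle (P D : nat -> nat -> nat -> K) : Prop :=
  regular_qmagma P D /\
  (forall (a b c : vec) (k : 'I_n),
     sw b (fun b1 b2 => bil P (bil P a b1) (bil D c b2) k) =
     sw c (fun c1 c2 => bil P (bil P a c2) (bil P b c1) k)) /\
  (forall (a b c : vec) (k : 'I_n),
     sw b (fun b1 b2 => bil D (bil P a b1) (bil P c b2) k) =
     sw c (fun c1 c2 => bil P (bil D a c2) (bil D b c1) k)) /\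
  (forall (a b c : vec) (k : 'I_n),
     sw b (fun b1 b2 => bil D (bil D a b1) (bil D c b2) k) =
     sw c (fun c1 c2 => bil D (bil D a c2) (bil P b c1) k)).

End QCycle.

From mathcomp Require Import all_boot all_order all_algebra.
From mathcomp Require Import zify ring.
Set Implicit Arguments. Unset Strict Implicit. Unset Printing Implicit Defensive.
Import GRing.Theory.
Local Open Scope ring_scope.

(* Write f_{ij}^k for the structure constants of a coalgebra map C (x) C -> C.
   Comultiplicativity reads f_{ij}^{a+b} = sum f_{i1 j1}^a f_{i2 j2}^b over
   i1 + i2 = i, j1 + j2 = j, the left side being 0 when a + b >= n.  Hence, if
   f_{0j}^1 = 0 for j < m, then f_{ij}^k = 0 as soon as the weight m i + j is
   below m k.  This gives f_{00}^1 = 0 and f_{k0}^k = (f_{10}^1)^k, and the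
   vanishing coefficient f_{n-1,m}^n = n (f_{10}^1)^(n-1) f_{0m}^1 forces
   f_{0m}^1 = 0 in characteristic 0 once f_{10}^1 <> 0, which regularity
   guarantees for p and d.  Reading off the x_1-coordinate of the cycle
   identities (1) and (2) on basis vectors then yields p_{10}^1 = d_{10}^1 = 1
   and, by strong induction on m, m p_{11}^1 (d_{1m}^1 - p_{1m}^1) = 0. *)

Section OrdinalSums.
Variable V : nmodType.

Lemma sum_ord_single N k (G : nat -> V) : (k < N)%N ->
  (forall x, (x < N)%N -> x != k -> G x = 0) -> \sum_(x < N) G x = G k.
Proof.
move=> hk G0; rewrite (bigD1 (Ordinal hk)) //= big1 ?addr0 // => x hx.
by apply: G0 (ltn_ord x) _; apply: contra hx => /eqP e; apply/eqP/val_inj.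
Qed.

Lemma sum_ord_pair N k1 k2 (G : nat -> V) : (k1 < N)%N -> (k2 < N)%N -> k1 != k2 ->
  (forall x, (x < N)%N -> x != k1 -> x != k2 -> G x = 0) ->
  \sum_(x < N) G x = G k1 + G k2.
Proof.
move=> h1 h2 h12 G0; rewrite (bigD1 (Ordinal h1)) //= (bigD1 (Ordinal h2)) /=; last first.
  by apply: contra h12 => /eqP e; rewrite -[k1]/(nat_of_ord (Ordinal h1)) -e.
rewrite big1 ?addr0 // => x /andP [hx1 hx2].
by apply: G0 (ltn_ord x) _ _; [move: hx1 | move: hx2];
  apply: contra => /eqP e; apply/eqP/val_inj.
Qed.

Lemma sum_ord2_single N M k l (G : nat -> nat -> V) : (k < N)%N -> (l < M)%N ->
  (forall x y, (x < N)%N -> (y < M)%N -> (x != k) || (y != l) -> G x y = 0) ->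
  \sum_(x < N) \sum_(y < M) G x y = G k l.
Proof.
move=> hk hl G0; rewrite (@sum_ord_single N k (fun x => \sum_(y < M) G x y) hk).
  by apply: sum_ord_single => // y hy hyl; apply: G0 => //; rewrite hyl orbT.
by move=> x hx hxk; apply: big1 => y _; apply: G0 => //; rewrite hxk.
Qed.

Lemma sum_ord2_pair N M k1 l1 k2 l2 (G : nat -> nat -> V) :
  (k1 < N)%N -> (l1 < M)%N -> (k2 < N)%N -> (l2 < M)%N -> (k1 != k2) || (l1 != l2) ->
  (forall x y, (x < N)%N -> (y < M)%N ->
     (x != k1) || (y != l1) -> (x != k2) || (y != l2) -> G x y = 0) ->
  \sum_(x < N) \sum_(y < M) G x y = G k1 l1 + G k2 l2.
Proof.
move=> h1 g1 h2 g2 hd G0; have [e|ne] := eqVneq k1 k2.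
  subst k2; rewrite eqxx /= in hd.
  rewrite (@sum_ord_single N k1 (fun x => \sum_(y < M) G x y) h1); last first.
    by move=> x hx hxk; apply: big1 => y _; apply: G0 => //; rewrite hxk.
  by apply: sum_ord_pair => // y hy hy1 hy2; apply: G0 => //; rewrite ?hy1 ?hy2 orbT.
rewrite (@sum_ord_pair N k1 k2 (fun x => \sum_(y < M) G x y) h1 h2 ne); last first.
  by move=> x hx hx1 hx2; apply: big1 => y _; apply: G0 => //; rewrite ?hx1 ?hx2.
rewrite (@sum_ord_single M l1 (G k1) g1); last first.
  by move=> y hy hy1; apply: G0 => //; rewrite ?hy1 ?orbT // ne.
rewrite (@sum_ord_single M l2 (G k2) g2) // => y hy hy1.
by apply: G0 => //; rewrite ?hy1 ?orbT // eq_sym ne.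
Qed.

Lemma sum_ord_leq N j (G : nat -> V) : (j < N)%N ->
  \sum_(x < N) (if (x <= j)%N then G x else 0) = \sum_(x < j.+1) G x.
Proof. by move=> hj; rewrite (big_ord_widen _ G hj) [RHS]big_mkcond. Qed.

Lemma sum_ord_addn_eq N i i1 (G : nat -> V) : (i < N)%N ->
  \sum_(i2 < N | (i1 + i2)%N == i) G i2 = if (i1 <= i)%N then G (i - i1)%N else 0.
Proof.
move=> hi; case: leqP => h; last by rewrite big1 // => x /eqP; lia.
have hlt : (i - i1 < N)%N by lia.
rewrite (bigD1 (Ordinal hlt)) /=; last by apply/eqP; lia.
rewrite big1 ?addr0 // => x /andP [/eqP hx hne]; exfalso.
by move/negP: hne; apply; apply/eqP/val_inj => /=; lia.
Qed.

End OrdinalSums.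

Section Basis.
Variables (K : fieldType) (n : nat).

Lemma bil_bas (f : nat -> nat -> nat -> K) i j (k : 'I_n) : (i < n)%N -> (j < n)%N ->
  bil f (bas K i) (bas K j) k = f i j k.
Proof.
move=> hi hj; rewrite /bil /bas.
rewrite (@sum_ord2_single _ n n i j (fun x y => (x == i)%:R * (y == j)%:R * f x y k)) //.
  by rewrite !eqxx !mul1r.
by move=> x y _ _ /orP [] /negPf ->; rewrite ?(mul0r, mulr0).
Qed.

Lemma bil_bas_r (f : nat -> nat -> nat -> K) (w : vec K n) j (k : 'I_n) : (j < n)%N ->
  bil f w (bas K j) k = \sum_(u < n) w u * f u j k.
Proof.
move=> hj; apply: eq_bigr => u _.
rewrite (@sum_ord_single _ n j (fun y => w u * (y == j)%:R * f u y k)) //.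
  by rewrite eqxx mulr1.
by move=> y _ /negPf ->; rewrite mulr0 mul0r.
Qed.

Lemma eps_bas0 : (0 < n)%N -> eps (bas K (n:=n) 0) = 1.
Proof.
move=> hn; rewrite /eps /bas (@sum_ord_single _ n 0 (fun j => (j == 0%N)%:R * (j == 0%N)%:R)) //.
  by rewrite mul1r.
by move=> x _ /negPf ->; rewrite mul0r.
Qed.

Lemma sw_bas (F : vec K n -> vec K n -> K) j : (j < n)%N ->
  sw (bas K j) F = \sum_(j1 < j.+1) F (bas K j1) (bas K (j - j1)).
Proof.
move=> hj; rewrite -(@sum_ord_leq _ n j (fun j1 => F (bas K j1) (bas K (j - j1)))) //.
apply: eq_bigr => j1 _.
have deltaE (j2 : 'I_n) : delta (bas K j) j1 j2 = ((j1 + j2)%N == j)%:R.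
  rewrite /delta /bas (@sum_ord_single _ n j (fun y => (y == j)%:R * ((j1 + j2)%N == y)%:R)) //.
    by rewrite eqxx mul1r.
  by move=> y _ /negPf ->; rewrite mul0r.
under eq_bigr => j2 _ do rewrite deltaE.
case: leqP => h; last first.
  apply: big1 => x _; have /negPf -> : (j1 + x)%N != j by lia.
  by rewrite mul0r.
rewrite (@sum_ord_single _ n (j - j1) (fun y => ((j1 + y)%N == j)%:R * F (bas K j1) (bas K y))).
- by rewrite subnKC // eqxx mul1r.
- lia.
move=> y _ hy; have /negPf -> : (j1 + y)%N != j by lia.
by rewrite mul0r.
Qed.

Lemma sw_bas0 (F : vec K n -> vec K n -> K) : (0 < n)%N ->
  sw (bas K 0) F = F (bas K 0) (bas K 0).
Proof. by move=> hn; rewrite sw_bas // big_ord1. Qed.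

Lemma sw_bas_bil_bil (Q R1 R2 : nat -> nat -> nat -> K) i l j (k : 'I_n) :
  (i < n)%N -> (l < n)%N -> (j < n)%N ->
  sw (bas K j) (fun b1 b2 => bil Q (bil R1 (bas K i) b1) (bil R2 (bas K l) b2) k) =
  \sum_(j1 < j.+1) \sum_(u < n) \sum_(v < n) R1 i j1 u * (R2 l (j - j1)%N v * Q u v k).
Proof.
move=> hi hl hj; rewrite sw_bas //; apply: eq_bigr => j1 _.
apply: eq_bigr => u _; apply: eq_bigr => v _.
have hj1 := ltn_ord j1.
by rewrite !bil_bas ?mulrA //; lia.
Qed.

Lemma sw_bas_bil_bil_swap (Q R1 R2 : nat -> nat -> nat -> K) i l j (k : 'I_n) :
  (i < n)%N -> (l < n)%N -> (j < n)%N ->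
  sw (bas K j) (fun c1 c2 => bil Q (bil R1 (bas K i) c2) (bil R2 (bas K l) c1) k) =
  \sum_(c1 < j.+1) \sum_(u < n) \sum_(v < n) R1 i (j - c1)%N u * (R2 l c1 v * Q u v k).
Proof.
move=> hi hl hj; rewrite sw_bas //; apply: eq_bigr => c1 _.
apply: eq_bigr => u _; apply: eq_bigr => v _.
have hc1 := ltn_ord c1.
by rewrite !bil_bas ?mulrA //; lia.
Qed.

End Basis.

Section CoalgebraMorphism.
Variables (K : fieldType) (n : nat) (f : nat -> nat -> nat -> K).
Hypotheses (hn : (1 < n)%N) (Hf : coalg_morph n f).

Lemma cmorph_counit i j : (i < n)%N -> (j < n)%N ->
  f i j 0%N = ((i == 0%N) && (j == 0%N))%:R.
Proof. by move=> hi hj; exact: (Hf.1 (Ordinal hi) (Ordinal hj)). Qed.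

Lemma cmorph_comul a b i j : (a < n)%N -> (b < n)%N -> (i < n)%N -> (j < n)%N ->
  (if (a + b < n)%N then f i j (a + b) else 0) =
  \sum_(i1 < n) \sum_(j1 < n)
     (if (i1 <= i)%N && (j1 <= j)%N then f i1 j1 a * f (i - i1) (j - j1) b else 0).
Proof.
move=> ha hb hi hj.
have -> : (if (a + b < n)%N then f i j (a + b) else 0) =
    \sum_(k < n) f i j k * ((a + b)%N == k)%:R.
  case: ltnP => hab.
    rewrite (@sum_ord_single _ n (a + b) (fun k => f i j k * ((a + b)%N == k)%:R)) //.
      by rewrite eqxx mulr1.
    by move=> k _; rewrite eq_sym => /negPf ->; rewrite mulr0.
  rewrite big1 // => k _; have /negPf -> : (a + b)%N != k by have := ltn_ord k; lia.
  by rewrite mulr0.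
rewrite (Hf.2 (Ordinal hi) (Ordinal hj) (Ordinal ha) (Ordinal hb)) /=.
apply: eq_bigr => i1 _.
under eq_bigr => i2 _ do under eq_bigr => j1 _ do
  rewrite (@sum_ord_addn_eq _ n j j1 (fun j2 => f i1 j1 a * f i2 j2 b)) //.
rewrite (@sum_ord_addn_eq _ n i i1 (fun i2 => \sum_(j1 < n)
   (if (j1 <= j)%N then f i1 j1 a * f i2 (j - j1) b else 0))) //.
by case: leqP => //= _; rewrite big1.
Qed.

Lemma cmorph001 : f 0%N 0%N 1%N = 0.
Proof.
have h0 : (0 < n)%N by lia.
have comul00 b : (b < n)%N ->
    (if (b.+1 < n)%N then f 0%N 0%N b.+1 else 0) = f 0%N 0%N 1%N * f 0%N 0%N b.
  move=> hb; rewrite -add1n (@cmorph_comul 1 b 0 0) //.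
  rewrite (@sum_ord2_single _ n n 0 0 (fun x y => if (x <= 0)%N && (y <= 0)%N
       then f x y 1%N * f (0 - x) (0 - y) b else 0)) //.
  by move=> x y _ _ hxy; case: ifP => // /andP [hx hy]; exfalso; lia.
have pow k : (k < n)%N -> f 0%N 0%N k = f 0%N 0%N 1%N ^+ k.
  elim: k => [|k IH] hk; first by rewrite cmorph_counit.
  by have := comul00 k (ltnW hk); rewrite hk => ->; rewrite IH ?exprS // ltnW.
have := comul00 n.-1; rewrite prednK // ltnn (pow n.-1) ?prednK // -exprS.
by move=> /(_ (leqnn n))/esym/eqP; rewrite expf_eq0 => /andP [_ /eqP].
Qed.

Lemma cmorph_weight_vanish m : (0 < m)%N -> (forall j, (j < m)%N -> f 0%N j 1%N = 0) ->
  forall k i j, (k < n)%N -> (i < n)%N -> (j < n)%N ->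
  (m * i + j < m * k)%N -> f i j k = 0.
Proof.
move=> hm f0j1.
have weight1 i j : (m * i + j < m)%N -> f i j 1%N = 0.
  case: i => [|i] h; first by apply: f0j1; lia.
  by move: h; rewrite mulnS; lia.
elim=> [|k IH] i j hk hi hj h; first by lia.
case: k IH hk h => [|k] IH hk h; first by apply: weight1; rewrite muln1 in h.
have := @cmorph_comul 1 k.+1 i j hn (ltnW hk) hi hj; rewrite add1n hk => ->.
apply: big1 => x _; apply: big1 => y _; case: ifP => // /andP [hx hy].
have [hxy|hxy] := ltnP (m * x + y) m; first by rewrite weight1 ?mul0r.
have E : (m * i = m * x + m * (i - x))%N by rewrite -mulnDr subnKC.
by rewrite (IH _ _ (ltnW hk)) ?mulr0 //; lia.
Qed.

Lemma cmorph_vanish_lt_add k i j : (k < n)%N -> (i < n)%N -> (j < n)%N ->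
  (i + j < k)%N -> f i j k = 0.
Proof.
move=> hk hi hj h; apply: (@cmorph_weight_vanish 1) => //; last by rewrite !mul1n.
move=> j' hj'; have -> : j' = 0%N by lia.
exact: cmorph001.
Qed.

Lemma cmorph_k0k k : (k < n)%N -> f k 0%N k = f 1%N 0%N 1%N ^+ k.
Proof.
elim: k => [|k IH] hk; first by rewrite cmorph_counit //; lia.
have := @cmorph_comul 1 k k.+1 0 hn (ltnW hk) hk (ltnW hn); rewrite add1n hk => ->.
rewrite (@sum_ord2_single _ n n 1 0 (fun x y => if (x <= k.+1)%N && (y <= 0)%N
       then f x y 1%N * f (k.+1 - x) (0 - y) k else 0)) //=; first last.
- move=> x y hx hy hxy; case: ifP => // /andP [hxk hy0].
  have y0 : y = 0%N by lia.
  subst y; case: x hx hxy hxk => [|[|x]] hx hxy hxk //.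
    by rewrite cmorph001 mul0r.
  by rewrite (@cmorph_vanish_lt_add k) ?mulr0 //; lia.
- lia.
by rewrite subn1 subnn /= IH ?exprS //; lia.
Qed.

Section LeadingCoefficients.
Variable m : nat.
Hypotheses (hm : (0 < m)%N) (hmn : (m < n)%N)
  (f0j1 : forall j, (j < m)%N -> f 0%N j 1%N = 0).

Lemma cmorph_comul_km k : (0 < k)%N -> (k < n)%N ->
  (if (k.+1 < n)%N then f k m k.+1 else 0) =
  f 1%N 0%N 1%N * f k.-1 m k + f 0%N m 1%N * f k 0%N k.
Proof.
move=> hk0 hk; have := @cmorph_comul 1 k k m hn hk hk hmn; rewrite add1n => ->.
rewrite (@sum_ord2_pair _ n n 1 0 0 m (fun x y => if (x <= k)%N && (y <= m)%N
      then f x y 1%N * f (k - x) (m - y) k else 0)); [ | lia | lia | lia | lia | by [] | ].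
  have -> : ((1 <= k) && (0 <= m))%N by lia.
  have -> : ((0 <= k) && (m <= m))%N by lia.
  by rewrite subn1 !subn0 subnn.
move=> x y hx hy h1 h2; case: ifP => // /andP [hxk hym].
have [hw|hw] := ltnP (m * x + y) m.
  by rewrite (cmorph_weight_vanish hm f0j1) ?mul0r //; lia.
have hw' : (m < m * x + y)%N.
  by move: h1 h2 hw hym; case: x {hx hxk} => [|[|x]]; rewrite ?muln0 ?muln1 ?mulnS; lia.
have E : (m * k = m * x + m * (k - x))%N by rewrite -mulnDr subnKC.
by rewrite (cmorph_weight_vanish hm f0j1 (k:=k)) ?mulr0 //; lia.
Qed.

Lemma cmorph_predk_m k : (0 < k)%N -> (k < n)%N ->
  f k.-1 m k = k%:R * f 1%N 0%N 1%N ^+ k.-1 * f 0%N m 1%N.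
Proof.
elim: k => [|k IH] // _ hk.
case: k IH hk => [|k] IH hk; first by rewrite /= expr0 !mul1r.
have := cmorph_comul_km (ltn0Sn k) (ltnW hk); rewrite hk => /= ->.
by rewrite IH ?(ltnW hk) // (cmorph_k0k (ltnW hk)) /= exprS; ring.
Qed.

End LeadingCoefficients.

(* Comultiplicativity in the out-of-range degree n gives
   0 = n (f_{10}^1)^(n-1) f_{0m}^1. *)
Lemma cmorph0j1 : [pchar K] =i pred0 -> f 1%N 0%N 1%N != 0 ->
  forall m, (m < n)%N -> f 0%N m 1%N = 0.
Proof.
move=> hK h101; elim/ltn_ind => -[|m] IH hm; first exact: cmorph001.
have f0j1 j : (j < m.+1)%N -> f 0%N j 1%N = 0 by move=> hj; apply: IH => //; lia.
have hn1 : (0 < n.-1)%N by lia.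
have hn1' : (n.-1 < n)%N by lia.
have := cmorph_comul_km (ltn0Sn m) hm f0j1 hn1 hn1'.
rewrite prednK ?ltnn; last by lia.
rewrite (cmorph_predk_m (ltn0Sn m) hm f0j1 hn1 hn1') (cmorph_k0k hn1').
have [n' en] : exists n', n = n'.+2 by exists n.-2; lia.
rewrite en /= => E.
have : n'.+2%:R * f 1%N 0%N 1%N ^+ n'.+1 * f 0%N m.+1 1%N = 0 by rewrite E exprS; ring.
move/eqP; rewrite !mulf_eq0 expf_eq0 (negPf h101) ((pcharf0P K).1 hK) /=.
by move/eqP.
Qed.

Section Vanishing0j1.
Hypothesis f0j1 : forall j, (j < n)%N -> f 0%N j 1%N = 0.

Lemma cmorph_vanish_lt_left k i j : (k < n)%N -> (i < n)%N -> (j < n)%N ->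
  (i < k)%N -> f i j k = 0.
Proof.
move=> hk hi hj hik; apply: (cmorph_weight_vanish (ltnW hn) f0j1 hk hi hj).
have : (n * i.+1 <= n * k)%N by rewrite leq_mul2l hik orbT.
by rewrite mulnS; lia.
Qed.

Lemma cmorph1j_neq1 j u : (j < n)%N -> (u < n)%N -> u != 1%N -> f 1%N j u = 0.
Proof.
move=> hj hu hu1; case: u hu hu1 => [|u] hu hu1; first by rewrite cmorph_counit.
by rewrite cmorph_vanish_lt_left //; lia.
Qed.

Lemma sum_cmorph0j j (Q : nat -> K) : (j < n)%N ->
  \sum_(v < n) f 0%N j v * Q v = (j == 0%N)%:R * Q 0%N.
Proof.
move=> hj; have h0 : (0 < n)%N by lia.
rewrite (@sum_ord_single _ n 0 (fun v => f 0%N j v * Q v)) ?cmorph_counit // => v hv hv0.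
by rewrite cmorph_vanish_lt_left ?mul0r //; lia.
Qed.

Lemma sum_cmorph1j j (Q : nat -> K) : (j < n)%N ->
  \sum_(v < n) f 1%N j v * Q v = f 1%N j 1%N * Q 1%N.
Proof.
move=> hj; rewrite (@sum_ord_single _ n 1 (fun v => f 1%N j v * Q v)) // => v hv hv1.
by rewrite cmorph1j_neq1 ?mul0r.
Qed.

Lemma sum2_cmorph1j j (G : nat -> nat -> K) : (j < n)%N ->
  \sum_(u < n) \sum_(v < n) f 1%N j u * G u v = f 1%N j 1%N * \sum_(v < n) G 1%N v.
Proof.
move=> hj; under eq_bigr => u _ do rewrite -mulr_sumr.
exact: (sum_cmorph1j (fun u => \sum_(v < n) G u v)).
Qed.

Lemma cmorph_k1k : f 1%N 0%N 1%N = 1 -> forall k, (k < n)%N -> f k 1%N k = k%:R * f 1%N 1%N 1%N.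
Proof.
move=> h101; elim=> [|k IH] hk; first by rewrite cmorph_counit ?mul0r //; lia.
have := @cmorph_comul 1 k k.+1 1 hn (ltnW hk) hk hn; rewrite add1n hk => ->.
rewrite (@sum_ord2_pair _ n n 1 0 1 1 (fun x y => if (x <= k.+1)%N && (y <= 1)%N
      then f x y 1%N * f (k.+1 - x) (1 - y) k else 0)); [ | lia | lia | lia | lia | by [] | ].
  rewrite /= subn1 /= subn0 subnn IH; last lia.
  by rewrite (cmorph_k0k (ltnW hk)) h101 expr1n mulr1 mul1r mulrS mulrDl mul1r addrC.
move=> x y hx hy hx1 hx2; case: ifP => // /andP [hxk hy1].
case: x hx hx1 hx2 hxk => [|[|x]] hx hx1 hx2 hxk.
- by rewrite f0j1 ?mul0r.
- by exfalso; move: hx1 hx2 hy1; case: y hy => [|[|y]].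
- by rewrite (@cmorph_vanish_lt_left k (k.+1 - x.+2) (1 - y)) ?mulr0 //; lia.
Qed.

End Vanishing0j1.

End CoalgebraMorphism.

Lemma regular_coeff10 (K : fieldType) (n : nat) (hn : (1 < n)%N)
    (P U : nat -> nat -> nat -> K) :
  coalg_morph n U -> bil P (bil U (bas K 1) (bas K 0)) (bas K 0) (Ordinal hn) = 1 ->
  P 1%N 0%N 1%N != 0.
Proof.
move=> HU; rewrite bil_bas_r; last lia.
rewrite (eq_bigr (fun u : 'I_n => U 1%N 0%N u * P u 0%N 1%N)); last first.
  by move=> u _; rewrite bil_bas //; lia.
rewrite (@sum_ord_single _ n 1 (fun u => U 1%N 0%N u * P u 0%N 1%N)) //; last first.
  move=> u hu hu1; case: u hu hu1 => [|[|u]] hu hu1 //.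
    by rewrite (cmorph_counit HU) ?mul0r //; lia.
  by rewrite (cmorph_vanish_lt_add hn HU) ?mul0r //; lia.
move=> h; apply/eqP => P0; move: h; rewrite P0 mulr0 => /eqP.
by rewrite eq_sym oner_eq0.
Qed.

Section CycleCoalgebra.
Variables (K : fieldType) (n : nat) (P D : nat -> nat -> nat -> K).
Hypotheses (hn : (1 < n)%N) (HP : coalg_morph n P) (HD : coalg_morph n D).
Hypotheses (P0j1 : forall j, (j < n)%N -> P 0%N j 1%N = 0)
  (D0j1 : forall j, (j < n)%N -> D 0%N j 1%N = 0).
Hypothesis cycle1 : forall (a b c : vec K n) (k : 'I_n),
  sw b (fun b1 b2 => bil P (bil P a b1) (bil D c b2) k) =
  sw c (fun c1 c2 => bil P (bil P a c2) (bil P b c1) k).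
Hypothesis cycle2 : forall (a b c : vec K n) (k : 'I_n),
  sw b (fun b1 b2 => bil D (bil P a b1) (bil P c b2) k) =
  sw c (fun c1 c2 => bil P (bil D a c2) (bil D b c1) k).

Lemma cycle1_coeff1 j l : (j < n)%N -> (l < n)%N ->
  \sum_(j1 < j.+1) P 1%N j1 1%N * \sum_(v < n) D l (j - j1)%N v * P 1%N v 1%N =
  \sum_(c1 < l.+1) P 1%N (l - c1)%N 1%N * \sum_(v < n) P j c1 v * P 1%N v 1%N.
Proof.
move=> hj hl; have := cycle1 (bas K 1) (bas K j) (bas K l) (Ordinal hn).
rewrite sw_bas_bil_bil // sw_bas_bil_bil_swap //= => E.
apply: etrans (etrans _ E) _; apply: eq_bigr => i _.
  rewrite (sum2_cmorph1j hn HP P0j1 (fun u v => D l (j - i)%N v * P u v 1%N)) //.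
  exact: leq_trans (ltn_ord i) hj.
rewrite (sum2_cmorph1j hn HP P0j1 (fun u v => P j i v * P u v 1%N)) //.
exact: leq_ltn_trans (leq_subr i l) hl.
Qed.

Lemma cycle2_coeff1 j l : (j < n)%N -> (l < n)%N ->
  \sum_(j1 < j.+1) P 1%N j1 1%N * \sum_(v < n) P l (j - j1)%N v * D 1%N v 1%N =
  \sum_(c1 < l.+1) D 1%N (l - c1)%N 1%N * \sum_(v < n) D j c1 v * P 1%N v 1%N.
Proof.
move=> hj hl; have := cycle2 (bas K 1) (bas K j) (bas K l) (Ordinal hn).
rewrite sw_bas_bil_bil // sw_bas_bil_bil_swap //= => E.
apply: etrans (etrans _ E) _; apply: eq_bigr => i _.
  rewrite (sum2_cmorph1j hn HP P0j1 (fun u v => P l (j - i)%N v * D u v 1%N)) //.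
  exact: leq_trans (ltn_ord i) hj.
rewrite (sum2_cmorph1j hn HD D0j1 (fun u v => D j i v * P u v 1%N)) //.
exact: leq_ltn_trans (leq_subr i l) hl.
Qed.

Hypotheses (hP111 : P 1%N 1%N 1%N != 0) (hP101 : P 1%N 0%N 1%N != 0).
Hypothesis hK : [pchar K] =i pred0.

Lemma P101_eq1 : P 1%N 0%N 1%N = 1.
Proof.
have := cycle1_coeff1 hn (ltnW hn).
rewrite big_ord_recr !big_ord1 /= subnn !subn0.
rewrite (sum_cmorph0j hn HD D0j1 (fun v => P 1%N v 1%N)) //.
rewrite (sum_cmorph0j hn HD D0j1 (fun v => P 1%N v 1%N)) ?(ltnW hn) //.
rewrite (sum_cmorph1j hn HP P0j1 (fun v => P 1%N v 1%N)) ?(ltnW hn) //= => E.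
have : P 1%N 1%N 1%N * P 1%N 0%N 1%N * (P 1%N 0%N 1%N - 1) = 0.
  by rewrite -[RHS](subrr (P 1%N 0%N 1%N * (P 1%N 0%N 1%N * P 1%N 1%N 1%N))) -{2}E; ring.
by move/eqP; rewrite !mulf_eq0 (negPf hP111) (negPf hP101) subr_eq0 => /eqP.
Qed.

Lemma D101_eq1 : D 1%N 0%N 1%N = 1.
Proof.
have := cycle1_coeff1 (ltnW hn) hn.
rewrite big_ord1 big_ord_recr big_ord1 /= subnn !subn0.
rewrite (sum_cmorph1j hn HD D0j1 (fun v => P 1%N v 1%N)) ?(ltnW hn) //.
rewrite (sum_cmorph0j hn HP P0j1 (fun v => P 1%N v 1%N)) ?(ltnW hn) //.
rewrite (sum_cmorph0j hn HP P0j1 (fun v => P 1%N v 1%N)) //= => E.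
have : P 1%N 0%N 1%N * P 1%N 1%N 1%N * (D 1%N 0%N 1%N - 1) = 0.
  by rewrite -[RHS](subrr (P 1%N 0%N 1%N * (D 1%N 0%N 1%N * P 1%N 1%N 1%N))) {2}E; ring.
by move/eqP; rewrite !mulf_eq0 (negPf hP111) (negPf hP101) subr_eq0 => /eqP.
Qed.

Section InductionStep.
Variable m : nat.
Hypotheses (hm : (m < n)%N) (IH : forall j, (j < m)%N -> D 1%N j 1%N = P 1%N j 1%N).

Lemma sum_Pm_mul_diff j : (j < n)%N ->
  \sum_(v < n) P m j v * D 1%N v 1%N - \sum_(v < n) P m j v * P 1%N v 1%N =
  P m j m * (D 1%N m 1%N - P 1%N m 1%N).
Proof.
move=> hj; rewrite -sumrB.
rewrite (@sum_ord_single _ n m (fun v => P m j v * D 1%N v 1%N - P m j v * P 1%N v 1%N)) //.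
  by rewrite mulrBr.
move=> v hv hvm; case: (ltnP v m) => h; first by rewrite IH // subrr.
by rewrite (cmorph_vanish_lt_left hn HP P0j1 hv) ?mul0r ?subrr //; lia.
Qed.

Lemma convolution_diff :
  \sum_(c1 < m.+1) D 1%N (m - c1)%N 1%N * \sum_(v < n) D 1%N c1 v * P 1%N v 1%N -
  \sum_(j1 < m.+1) P 1%N j1 1%N * \sum_(v < n) D 1%N (m - j1)%N v * P 1%N v 1%N =
  P 1%N 1%N 1%N * (D 1%N m 1%N - P 1%N m 1%N).
Proof.
rewrite -sumrB big_ord_recr big1 ?add0r /=.
  rewrite subnn (sum_cmorph1j hn HD D0j1 (fun v => P 1%N v 1%N)) //.
  rewrite (sum_cmorph1j hn HD D0j1 (fun v => P 1%N v 1%N)) ?(ltnW hn) //.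
  by rewrite D101_eq1; ring.
move=> i _; have hi := ltn_ord i.
rewrite (sum_cmorph1j hn HD D0j1 (fun v => P 1%N v 1%N)); last lia.
rewrite (sum_cmorph1j hn HD D0j1 (fun v => P 1%N v 1%N)); last lia.
by rewrite (IH hi); ring.
Qed.

Lemma D1m1_eq_P1m1 : D 1%N m 1%N = P 1%N m 1%N.
Proof.
have [->|hm0] := posnP m; first by rewrite D101_eq1 P101_eq1.
have e1 := cycle1_coeff1 hm hn.
have e2 := cycle2_coeff1 hn hm.
rewrite [RHS]big_ord_recr big_ord1 /= subn0 subnn P101_eq1 mul1r in e1.
rewrite [LHS]big_ord_recr big_ord1 /= subn0 subnn P101_eq1 mul1r in e2.
have hconv := convolution_diff; rewrite -e2 e1 in hconv.
have hdiff0 := sum_Pm_mul_diff (ltnW hn).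
rewrite (cmorph_k0k hn HP hm) P101_eq1 expr1n mul1r in hdiff0.
have hdiff1 := sum_Pm_mul_diff hn.
rewrite (cmorph_k1k hn HP P0j1 P101_eq1 hm) in hdiff1.
have : m%:R * P 1%N 1%N 1%N * (D 1%N m 1%N - P 1%N m 1%N) = 0.
  rewrite -hdiff1 -[RHS](subrr (P 1%N 1%N 1%N * (D 1%N m 1%N - P 1%N m 1%N))).
  by rewrite -{1}hconv -hdiff0; ring.
move/eqP; rewrite !mulf_eq0 ((pcharf0P K).1 hK) (gtn_eqF hm0) (negPf hP111) subr_eq0.
by move/eqP.
Qed.

End InductionStep.

End CycleCoalgebra.

Theorem proposition4p3 (K : closedFieldType) (hK : [pchar K] =i pred0)
  (n : nat) (hn : (2 <= n)%N) (P D : nat -> nat -> nat -> K) :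
  regular_qcycle n P D -> P 1%N 1%N 1%N != 0 ->
  forall r : 'I_n, D 1%N r 1%N = P 1%N r 1%N.
Proof.
move=> [[HP [HD [U [V [HU [HV [invPU [_ [_ invDV]]]]]]]]] [cycle1 [cycle2 _]]] hP111.
have hn0 : (0 < n)%N by lia.
have hP101 : P 1%N 0%N 1%N != 0.
  apply: (regular_coeff10 HU).
  by have := invPU (bas K 1) (bas K 0) (Ordinal hn); rewrite sw_bas0 // eps_bas0 // mul1r.
have hD101 : D 1%N 0%N 1%N != 0.
  apply: (regular_coeff10 HV).
  by have := invDV (bas K 1) (bas K 0) (Ordinal hn); rewrite sw_bas0 // eps_bas0 // mul1r.
have P0j1 := cmorph0j1 hn HP hK hP101.
have D0j1 := cmorph0j1 hn HD hK hD101.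
suff D1m1 m : (m < n)%N -> D 1%N m 1%N = P 1%N m 1%N by move=> r; apply: D1m1.
elim/ltn_ind: m => m IH hm.
apply: (D1m1_eq_P1m1 hn HP HD P0j1 D0j1 cycle1 cycle2 hP111 hP101 hK hm) => j hj.
by apply: IH; lia.
Qed.
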